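(* Let $(X,\gamma)$ be a probability space and let $E_i\subseteq X$, $i\in\mathbb N$, be pairwise independent measurable sets with $\sum_{i=1}^\infty\gamma(E_i)=\infty$. Then for every measurable $E\subseteq X$ and every $\varepsilon>0$ there exists a positive integer $i$ such that $\gamma(E\cap E_i)>(\gamma(E)-\varepsilon)\gamma(E_i)$. *)

From Stdlib Require Import Reals.
Open Scope R_scope.

Record ProbSpace (X : Type) := {
  measurable : (X -> Prop) -> Prop;
  prob : (X -> Prop) -> R;
  measurable_full : measurable (fun _ => True);
  measurable_compl : forall A, measurable A -> measurable (fun x => ~ A x);
  measurable_bigcup : forall A : nat -> X -> Prop,
      (forall n, measurable (A n)) -> measurable (fun x => exists n, A n x);
  prob_ge0 : forall A, measurable A -> 0 <= prob A;
  prob_full : prob (fun _ => True) = 1;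
  prob_sigma_additive : forall A : nat -> X -> Prop,
      (forall n, measurable (A n)) ->
      (forall m n, m <> n -> forall x, A m x -> A n x -> False) ->
      infinite_sum (fun n => prob (A n)) (prob (fun x => exists n, A n x))
}.

Arguments measurable {X} _ _.
Arguments prob {X} _ _.

Definition pairwise_independent {X : Type} (P : ProbSpace X)
  (E : nat -> X -> Prop) : Prop :=
  forall i j : nat, i <> j ->
    prob P (fun x => E i x /\ E j x) = prob P (E i) * prob P (E j).

From Stdlib Require Import Reals Lra Lia Psatz.
From Stdlib Require Import Classical FunctionalExtensionality PropExtensionality.
Open Scope R_scope.

(* Suppose, for contradiction, that gamma(A /\ E_i) <= (a - eps) gamma(E_i)
   for every i >= 1, where a = gamma(A).  Fix m, let S = sum_{k<m} gamma(E_{k+1}) and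
   consider the simple function
       f = (1_A - a) + t (T - S),        T = sum_{k<m} 1_{E_{k+1}}.
   Its second moment is nonnegative; expanding it, pairwise independence bounds the
   variance of T by S, and the assumption makes the covariance of 1_A and T at most
   -eps S.  With t = eps this yields eps^2 S <= a (1 - a) <= 1/4, contradicting the
   divergence of sum gamma(E_i). *)

Fixpoint sum_lt (m : nat) (f : nat -> R) : R :=
  match m with O => 0 | S m' => f O + sum_lt m' (fun k => f (S k)) end.

Lemma sum_lt_ext m : forall f g, (forall k, (k < m)%nat -> f k = g k) ->
  sum_lt m f = sum_lt m g.
Proof.
  induction m as [|m IH]; intros f g H; simpl; [reflexivity|].
  rewrite (H 0%nat) by lia. f_equal. apply IH. intros k Hk. apply H. lia.
Qed.

Lemma sum_lt_le m : forall f g, (forall k, (k < m)%nat -> f k <= g k) ->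
  sum_lt m f <= sum_lt m g.
Proof.
  induction m as [|m IH]; intros f g H; simpl; [lra|].
  apply Rplus_le_compat; [apply H; lia|]. apply IH. intros k Hk. apply H. lia.
Qed.

Lemma sum_lt_plus m : forall f g,
  sum_lt m (fun k => f k + g k) = sum_lt m f + sum_lt m g.
Proof. induction m as [|m IH]; intros; simpl; [ring|]. rewrite IH. ring. Qed.

Lemma sum_lt_scal m : forall a f, sum_lt m (fun k => a * f k) = a * sum_lt m f.
Proof. induction m as [|m IH]; intros; simpl; [ring|]. rewrite IH. ring. Qed.

Lemma sum_lt_zero m : sum_lt m (fun _ => 0) = 0.
Proof. induction m as [|m IH]; simpl; [ring|]. rewrite IH. ring. Qed.

Lemma sum_lt_delta m : forall k p, (k < m)%nat ->
  sum_lt m (fun l => if Nat.eqb k l then p else 0) = p.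
Proof.
  induction m as [|m IH]; intros [|k] p Hk; try lia; simpl.
  - rewrite sum_lt_zero. ring.
  - rewrite IH by lia. ring.
Qed.

Lemma sum_lt_last m : forall f, sum_lt (S m) f = sum_lt m f + f m.
Proof.
  induction m as [|m IH]; intros f; [simpl; ring|].
  change (sum_lt (S (S m)) f) with (f 0%nat + sum_lt (S m) (fun k => f (S k))).
  rewrite IH. simpl. ring.
Qed.

Lemma sum_lt_sum_f_R0 f N : sum_lt (S N) f = sum_f_R0 f N.
Proof.
  induction N as [|N IH]; [simpl; ring|]. rewrite sum_lt_last, IH. reflexivity.
Qed.

Section FiniteAdditivity.
Variables (X : Type) (P : ProbSpace X).

Lemma prob_ext (A B : X -> Prop) : (forall x, A x <-> B x) -> prob P A = prob P B.
Proof.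
  intro H.
  replace B with A; [reflexivity|].
  apply functional_extensionality; intro x. apply propositional_extensionality, H.
Qed.

Lemma measurable_empty : measurable P (fun _ => False).
Proof.
  replace (fun _ : X => False) with (fun _ : X => ~ True).
  - apply measurable_compl, measurable_full.
  - apply functional_extensionality; intro x. apply propositional_extensionality. tauto.
Qed.

(* Intersections are complements of countable unions of complements. *)
Lemma measurable_and (A B : X -> Prop) : measurable P A -> measurable P B ->
  measurable P (fun x => A x /\ B x).
Proof.
  intros HA HB.
  set (C := fun n : nat => match n with 0%nat => fun x => ~ A x | _ => fun x => ~ B x end).
  assert (HC : forall n, measurable P (C n))
    by (intros [|n]; apply measurable_compl; assumption).
  replace (fun x => A x /\ B x) with (fun x => ~ (exists n, C n x)).
  - apply measurable_compl, measurable_bigcup, HC.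
  - apply functional_extensionality; intro x. apply propositional_extensionality. split.
    + intro Hnone. split; apply NNPP; intro Hn; apply Hnone;
        [exists 0%nat | exists 1%nat]; exact Hn.
    + intros [HAx HBx] [[|n] Hn]; contradiction.
Qed.

(* Countable additivity for the empty family forces prob(empty) = 2 prob(empty). *)
Lemma prob_empty : prob P (fun _ => False) = 0.
Proof.
  pose proof (prob_sigma_additive _ P (fun _ _ => False) (fun _ => measurable_empty)
                (fun _ _ _ _ h _ => h)) as Hsum.
  cbv beta in Hsum.
  rewrite (prob_ext (fun x => exists _ : nat, False) (fun _ => False)) in Hsum
    by (intro; split; [intros [_ []] | contradiction]).
  pose proof (prob_ge0 _ P _ measurable_empty) as Hge0.
  pose proof (sum_incr _ 1 _ Hsum (fun _ => Hge0)) as Hle. simpl in Hle. lra.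
Qed.

Lemma prob_disjoint_union (A B : X -> Prop) :
  measurable P A -> measurable P B -> (forall x, A x -> B x -> False) ->
  prob P (fun x => A x \/ B x) = prob P A + prob P B.
Proof.
  intros HA HB Hdisj.
  set (C := fun n : nat => match n with 0%nat => A | 1%nat => B | _ => fun _ => False end).
  assert (HC : forall n, measurable P (C n))
    by (intros [|[|n]]; [exact HA | exact HB | exact measurable_empty]).
  assert (HCdisj : forall m n, m <> n -> forall x, C m x -> C n x -> False).
  { intros [|[|m]] [|[|n]] Hmn x; simpl; try tauto; intros; apply Hdisj with x; tauto. }
  pose proof (prob_sigma_additive _ P C HC HCdisj) as Hsum.
  rewrite (prob_ext _ (fun x => A x \/ B x)) in Hsum.
  2:{ intro x; split.
      - intros [[|[|n]] Hn]; simpl in Hn; tauto.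
      - intros [Hx | Hx]; [exists 0%nat | exists 1%nat]; exact Hx. }
  apply (uniqueness_sum _ _ _ Hsum).
  intros e He. exists 1%nat. intros [|n] Hn; [lia|].
  replace (sum_f_R0 (fun n => prob P (C n)) (S n)) with (prob P A + prob P B).
  - unfold Rdist. rewrite Rminus_diag, Rabs_R0. exact He.
  - induction n as [|n IH]; [reflexivity|].
    simpl sum_f_R0 in *. rewrite <- IH by lia. simpl. rewrite prob_empty. ring.
Qed.

Lemma prob_split (S T S1 S2 : X -> Prop) : measurable P S -> measurable P T ->
  (forall x, S1 x <-> S x /\ T x) -> (forall x, S2 x <-> S x /\ ~ T x) ->
  prob P S = prob P S1 + prob P S2.
Proof.
  intros HS HT H1 H2.
  rewrite (prob_ext S1 _ H1), (prob_ext S2 _ H2), <- prob_disjoint_union.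
  - apply prob_ext. intro x. split; [|tauto]. intro Hx.
    destruct (classic (T x)); tauto.
  - apply measurable_and; assumption.
  - apply measurable_and; [assumption|]. apply measurable_compl; assumption.
  - tauto.
Qed.

End FiniteAdditivity.

Section SecondMoment.
Variables (X : Type) (P : ProbSpace X).

(* For the simple function f = d + sum_{k<m} c_k 1_{F_k} and an event G, the integral
   over G of f^2 equals  d^2 gamma(G) + 2 d lin_term + quad_term  below. *)
Definition lin_term (m : nat) (F : nat -> X -> Prop) (c : nat -> R) (G : X -> Prop) : R :=
  sum_lt m (fun k => c k * prob P (fun x => F k x /\ G x)).

Definition quad_term (m : nat) (F : nat -> X -> Prop) (c : nat -> R) (G : X -> Prop) : R :=
  sum_lt m (fun k => sum_lt m (fun l =>
    c k * c l * prob P (fun x => F k x /\ F l x /\ G x))).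

Definition sq_integral (m : nat) (F : nat -> X -> Prop) (c : nat -> R) (d : R)
  (G : X -> Prop) : R :=
  d * d * prob P G + 2 * d * lin_term m F c G + quad_term m F c G.

Lemma lin_term_split m F c G T :
  (forall k, measurable P (F k)) -> measurable P G -> measurable P T ->
  lin_term m F c G =
  lin_term m F c (fun x => T x /\ G x) + lin_term m F c (fun x => ~ T x /\ G x).
Proof.
  intros hF HG HT. unfold lin_term. rewrite <- sum_lt_plus.
  apply sum_lt_ext. intros k _.
  rewrite (prob_split _ P _ T (fun x => F k x /\ T x /\ G x)
             (fun x => F k x /\ ~ T x /\ G x));
    [ring | apply measurable_and; auto | exact HT | intro; tauto | intro; tauto].
Qed.

Lemma quad_term_split m F c G T :
  (forall k, measurable P (F k)) -> measurable P G -> measurable P T ->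
  quad_term m F c G =
  quad_term m F c (fun x => T x /\ G x) + quad_term m F c (fun x => ~ T x /\ G x).
Proof.
  intros hF HG HT. unfold quad_term. rewrite <- sum_lt_plus.
  apply sum_lt_ext. intros k _. rewrite <- sum_lt_plus.
  apply sum_lt_ext. intros l _.
  rewrite (prob_split _ P _ T (fun x => F k x /\ F l x /\ T x /\ G x)
             (fun x => F k x /\ F l x /\ ~ T x /\ G x));
    [ring | repeat apply measurable_and; auto | exact HT | intro; tauto | intro; tauto].
Qed.

Lemma lin_term_cons m F c G :
  lin_term (S m) F c G =
  c 0%nat * prob P (fun x => F 0%nat x /\ G x)
  + lin_term m (fun k => F (S k)) (fun k => c (S k)) G.
Proof. reflexivity. Qed.

Lemma quad_term_cons m F c G :
  let G0 := fun x => F 0%nat x /\ G x in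
  quad_term (S m) F c G =
  c 0%nat * c 0%nat * prob P G0
  + 2 * c 0%nat * lin_term m (fun k => F (S k)) (fun k => c (S k)) G0
  + quad_term m (fun k => F (S k)) (fun k => c (S k)) G.
Proof.
  intro G0. unfold quad_term, lin_term. simpl.
  rewrite (prob_ext _ P _ G0) by (intro; unfold G0; tauto).
  rewrite sum_lt_plus.
  assert (Hrow : forall g : nat -> R,
    (forall k, g k = prob P (fun x => F (S k) x /\ G0 x)) ->
    sum_lt m (fun k => c 0%nat * c (S k) * g k)
    = c 0%nat * sum_lt m (fun k => c (S k) * prob P (fun x => F (S k) x /\ G0 x))).
  { intros g Hg. rewrite <- sum_lt_scal. apply sum_lt_ext. intros k _. rewrite Hg. ring. }
  rewrite (Hrow (fun k => prob P (fun x => F 0%nat x /\ F (S k) x /\ G x)))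
    by (intro; apply prob_ext; intro; unfold G0; tauto).
  rewrite (sum_lt_ext m (fun k => c (S k) * c 0%nat * _) (fun k => c 0%nat * c (S k) *
             prob P (fun x => F (S k) x /\ F 0%nat x /\ G x))) by (intros; ring).
  rewrite (Hrow (fun k => prob P (fun x => F (S k) x /\ F 0%nat x /\ G x)))
    by (intro; apply prob_ext; intro; unfold G0; tauto).
  ring.
Qed.

(* Splitting G along F_0 reduces the second moment to two instances with one
   indicator less. *)
Lemma sq_integral_cons m F c d G : (forall k, measurable P (F k)) -> measurable P G ->
  sq_integral (S m) F c d G =
  sq_integral m (fun k => F (S k)) (fun k => c (S k)) (d + c 0%nat)
    (fun x => F 0%nat x /\ G x)
  + sq_integral m (fun k => F (S k)) (fun k => c (S k)) d (fun x => ~ F 0%nat x /\ G x).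
Proof.
  intros hF HG. unfold sq_integral.
  rewrite lin_term_cons, quad_term_cons.
  rewrite (lin_term_split m _ _ G (F 0%nat)), (quad_term_split m _ _ G (F 0%nat)) by auto.
  rewrite (prob_split _ P G (F 0%nat) (fun x => F 0%nat x /\ G x)
             (fun x => ~ F 0%nat x /\ G x)) by (auto; intro; tauto).
  ring.
Qed.

Lemma sq_integral_nonneg m : forall F c d G,
  (forall k, measurable P (F k)) -> measurable P G -> 0 <= sq_integral m F c d G.
Proof.
  induction m as [|m IH]; intros F c d G hF HG.
  - unfold sq_integral, lin_term, quad_term. simpl.
    pose proof (prob_ge0 _ P G HG). nra.
  - rewrite sq_integral_cons by assumption.
    apply Rplus_le_le_0_compat; apply IH; auto;
      apply measurable_and; auto; apply measurable_compl; auto.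
Qed.

End SecondMoment.

Arguments lin_term {X} P m F c G.
Arguments quad_term {X} P m F c G.

Section PairwiseIndependent.
Variables (X : Type) (P : ProbSpace X).
Variables (F : nat -> X -> Prop) (hF : forall k, measurable P (F k))
          (hind : pairwise_independent P F).

Lemma quad_term_indep m t :
  let sF := sum_lt m (fun k => prob P (F k)) in
  quad_term P m F (fun _ => t) (fun _ => True) <= t * t * (sF * sF + sF).
Proof.
  intro sF. unfold quad_term.
  apply Rle_trans with (sum_lt m (fun k => sum_lt m (fun l => t * t *
    (prob P (F k) * prob P (F l) + (if Nat.eqb k l then prob P (F k) else 0))))).
  - apply sum_lt_le; intros k Hk. apply sum_lt_le; intros l Hl.
    apply Rmult_le_compat_l; [nra|].
    destruct (Nat.eqb_spec k l) as [<- | Hkl].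
    + rewrite (prob_ext _ P _ (F k)) by (intro; tauto).
      pose proof (prob_ge0 _ P _ (hF k)). nra.
    + rewrite (prob_ext _ P _ (fun x => F k x /\ F l x)) by (intro; tauto).
      rewrite (hind k l Hkl). lra.
  - rewrite (sum_lt_ext m _ (fun k => t * t * (prob P (F k) * sF + prob P (F k)))).
    + rewrite sum_lt_scal, sum_lt_plus.
      rewrite (sum_lt_ext m (fun k => prob P (F k) * sF) (fun k => sF * prob P (F k)))
        by (intros; ring).
      rewrite sum_lt_scal. fold sF. lra.
    + intros k Hk. rewrite sum_lt_scal, sum_lt_plus, sum_lt_delta by exact Hk.
      rewrite sum_lt_scal. fold sF. reflexivity.
Qed.

(* Covariance inequality: the second moment of (1_A - a) + t (T - E T) is
   nonnegative, which after expansion reads as follows. *)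
Lemma covariance_bound (A : X -> Prop) (hA : measurable P A) m t :
  let a := prob P A in
  let sF := sum_lt m (fun k => prob P (F k)) in
  let sAF := sum_lt m (fun k => prob P (fun x => A x /\ F k x)) in
  2 * t * (a * sF - sAF) <= a * (1 - a) + t * t * sF.
Proof.
  intros a sF sAF.
  set (FA := fun k => match k with 0%nat => A | S j => F j end).
  set (cA := fun k : nat => match k with 0%nat => 1 | S _ => t end).
  assert (hFA : forall k, measurable P (FA k)) by (intros [|k]; simpl; auto).
  pose proof (sq_integral_nonneg X P (S m) FA cA (-(a + t * sF)) (fun _ => True)
                hFA (measurable_full _ P)) as Hpos.
  unfold sq_integral in Hpos.
  rewrite lin_term_cons, quad_term_cons in Hpos. simpl in Hpos.
  change (fun k : nat => F k) with F in Hpos.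
  assert (HlinT : lin_term P m F (fun _ => t) (fun _ => True) = t * sF).
  { unfold lin_term, sF. rewrite sum_lt_scal. f_equal. apply sum_lt_ext. intros k _.
    apply prob_ext. tauto. }
  assert (HlinA : lin_term P m F (fun _ => t) (fun x => A x /\ True) = t * sAF).
  { unfold lin_term, sAF. rewrite sum_lt_scal. f_equal. apply sum_lt_ext. intros k _.
    apply prob_ext. tauto. }
  rewrite HlinT, HlinA, prob_full in Hpos.
  rewrite (prob_ext _ P (fun x => A x /\ True) A) in Hpos by (intro; tauto).
  pose proof (quad_term_indep m t) as Hquad. fold sF in Hquad.
  fold a in Hpos. nra.
Qed.

Lemma bad_correlation_bound (A : X -> Prop) (hA : measurable P A) m eps :
  0 < eps ->
  (forall k, (k < m)%nat ->
     prob P (fun x => A x /\ F k x) <= (prob P A - eps) * prob P (F k)) ->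
  eps * eps * sum_lt m (fun k => prob P (F k)) <= 1 / 4.
Proof.
  intros Heps Hbad.
  pose proof (covariance_bound A hA m eps) as Hcov. simpl in Hcov.
  assert (HSA : sum_lt m (fun k => prob P (fun x => A x /\ F k x))
                <= (prob P A - eps) * sum_lt m (fun k => prob P (F k))).
  { rewrite <- sum_lt_scal. apply sum_lt_le. exact Hbad. }
  assert (Hq : prob P A * (1 - prob P A) <= 1 / 4)
    by (pose proof (pow2_ge_0 (prob P A - 1 / 2)); nra).
  nra.
Qed.

End PairwiseIndependent.

Theorem mainTheorem11 (X : Type) (P : ProbSpace X) (E : nat -> X -> Prop)
  (hEm : forall i, measurable P (E i))
  (hind : pairwise_independent P E)
  (hdiv : cv_infty (fun n => sum_f_R0 (fun k => prob P (E (S k))) n))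
  (A : X -> Prop) (hA : measurable P A) (eps : R) (heps : 0 < eps) :
  exists i : nat, (1 <= i)%nat /\
    prob P (fun x => A x /\ E i x) > (prob P A - eps) * prob P (E i).
Proof.
  apply NNPP. intro Hnone.
  assert (Hbad : forall k, prob P (fun x => A x /\ E (S k) x)
                           <= (prob P A - eps) * prob P (E (S k))).
  { intro k. apply Rnot_gt_le. intro Hgt. apply Hnone. exists (S k). split; [lia | exact Hgt]. }
  assert (hindS : pairwise_independent P (fun k => E (S k)))
    by (intros i j Hij; apply hind; lia).
  destruct (hdiv (1 / (eps * eps))) as [N HN].
  specialize (HN N (le_n N)). rewrite <- sum_lt_sum_f_R0 in HN.
  pose proof (bad_correlation_bound X P (fun k => E (S k)) (fun k => hEm (S k)) hindS
                A hA (S N) eps heps (fun k _ => Hbad k)) as Hbound.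
  assert (Hlarge : eps * eps * (1 / (eps * eps)) = 1) by (field; lra).
  assert (Heps2 : 0 < eps * eps) by nra.
  nra.
Qed.
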